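(* Let $\Phi,\Psi\in\mathcal{S}_+^m(\mathbb{T})$ and let $T$ be a measurable $\mathbb{C}^{m\times m}$-valued function on $\mathbb{T}$ such that $T$ and $T^{-1}$ are essentially bounded on $\mathbb{T}$. Then for every $\tau\in\mathbb{R}$, $$\mathcal{S}_T^{(\tau)}(\Phi\|\Psi)=\mathcal{S}_T^{(\tau)}(T^*\Phi T\,\|\,T^*\Psi T).$$
   Context: Integration $\int f$ denotes $\frac{1}{2\pi}\int_{-\pi}^{\pi} f(e^{j\vartheta})\,d\vartheta$. A star denotes conjugate transpose. $\mathcal{S}_+^m(\mathbb{T})$ is the set of measurable, bounded, coercive, Hermitian $\mathbb{C}^{m\times m}$-valued spectral density functions on the unit circle $\mathbb{T}$. For $\Psi\in\mathcal{S}_+^m(\mathbb{T})$, $W_\Psi$ is its canonical left spectral factor (outer, $\det W_\Psi\ne0$ on $\{|z|\ge1\}$, $W_\Psi(\infty)$ lower triangular with positive diagonal, $\Psi=W_\Psi W_\Psi^*$ on $\mathbb{T}$). For $\tau\in\mathbb{R}\setminus\{0,1\}$, $\mathcal{S}_T^{(\tau)}(\Phi\|\Psi):=\int\operatorname{tr}\big[\tfrac{1}{\tau(\tau-1)}(W_\Psi^{-1}\Phi W_\Psi^{-*})^{\tau}-\tfrac{1}{\tau-1}\Phi\Psi^{-1}\big]+\tfrac{m}{\tau}$; for $\tau=0$, $\mathcal{S}_T^{(0)}(\Phi\|\Psi):=\int\operatorname{tr}[\log\Psi-\log\Phi+\Phi\Psi^{-1}]-m$; for $\tau=1$, $\mathcal{S}_T^{(1)}(\Phi\|\Psi):=\int\operatorname{tr}[W_\Psi^{-1}\Phi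 W_\Psi^{-*}\log(W_\Psi^{-1}\Phi W_\Psi^{-*})-\Phi\Psi^{-1}]+m$. *)

From HB Require Import structures.
From mathcomp Require Import all_boot all_order all_algebra.
From mathcomp Require Import sesquilinear spectral.
From mathcomp Require Import complex.
From mathcomp Require Import all_classical all_reals all_analysis.

Set Implicit Arguments.
Unset Strict Implicit.
Unset Printing Implicit Defensive.

Import Order.TTheory GRing.Theory Num.Theory.
Import numFieldNormedType.Exports.
Local Open Scope classical_set_scope.
Local Open Scope ring_scope.
Local Open Scope complex_scope.

(* A function on the unit circle T is represented by its values on
   theta in [-pi, pi], i.e. F theta stands for F(e^{j theta}). *)

Section Defs.
Context {R : realType}.
Local Notation C := R[i].
Local Notation mu := (@lebesgue_measure R).

Definition Tdom : set R := [set x | - pi <= x <= pi].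

Definition mxstar (m n : nat) (A : 'M[C]_(m, n)) : 'M[C]_(n, m) :=
  (A ^t* )%sesqui.

Definition circ_int (f : R -> R) : \bar R :=
  ((2 * pi)^-1)%:E * (\int[mu]_(x in Tdom) (f x)%:E)%E.

Definition circ_intC (f : R -> C) : C :=
  (fine (circ_int (fun x => complex.Re (f x))))
    +i* (fine (circ_int (fun x => complex.Im (f x)))).

Definition mx_measurable (m n : nat) (F : R -> 'M[C]_(m, n)) : Prop :=
  forall i j, measurable_fun Tdom (fun x => complex.Re (F x i j)) /\
              measurable_fun Tdom (fun x => complex.Im (F x i j)).

Definition ess_bounded (m n : nat) (F : R -> 'M[C]_(m, n)) : Prop :=
  exists M : R, {ae mu, forall x, Tdom x -> forall i j, `|F x i j| <= M%:C}.

Definition spectral_density (m : nat) (Psi : R -> 'M[C]_m) : Prop :=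
  [/\ mx_measurable Psi,
      ess_bounded Psi,
      {ae mu, forall x, Tdom x -> mxstar (Psi x) = Psi x} &
      (exists2 eps : R, 0 < eps &
        {ae mu, forall x, Tdom x -> forall v : 'rV[C]_m,
           eps%:C * (v *m mxstar v) 0 0 <= (v *m Psi x *m mxstar v) 0 0})].

Definition expj (t : R) : C := cos t +i* sin t.

(* n-th Fourier coefficient (coefficient of z^n, z = e^{j theta}) *)
Definition fcoef (m : nat) (F : R -> 'M[C]_m) (n : int) : 'M[C]_m :=
  \matrix_(i, j) circ_intC (fun x => F x i j * expj (- (n%:~R * x))).

(* W is the canonical left spectral factor of Psi (given by its boundary
   values on T): W = sum_{k>=0} W_k z^{-k} is bounded analytic in |z| > 1
   (including infinity), with an inverse W^{-1} that is also bounded analytic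
   there (hence W is outer with det W <> 0 on |z| >= 1),
   W(infinity) = W_0 is lower triangular with positive diagonal, and
   Psi = W W^* on T. *)
Definition canonical_left_factor (m : nat) (Psi W : R -> 'M[C]_m) : Prop :=
  [/\ mx_measurable W /\ ess_bounded W,
      {ae mu, forall x, Tdom x -> W x \in unitmx} /\
      mx_measurable (fun x => invmx (W x)) /\ ess_bounded (fun x => invmx (W x)),
      (forall n : nat, (0 < n)%N ->
          fcoef W n%:Z = 0 /\ fcoef (fun x => invmx (W x)) n%:Z = 0),
      (forall i j : 'I_m, (i < j)%N -> fcoef W 0 i j = 0) /\
      (forall i : 'I_m, 0 < fcoef W 0 i i) &
      {ae mu, forall x, Tdom x -> Psi x = W x *m mxstar (W x)}].

Definition mxfun (m : nat) (f : R -> R) (A : 'M[C]_m) : 'M[C]_m :=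
  invmx (spectralmx A)
    *m diag_mx (\row_i ((f (complex.Re (spectral_diag A 0 i)))%:C))
    *m spectralmx A.

Definition mxpow (m : nat) (tau : R) (A : 'M[C]_m) := mxfun (fun t => t `^ tau) A.
Definition mxlog (m : nat) (A : 'M[C]_m) := mxfun (@ln R) A.
Definition mxxlogx (m : nat) (A : 'M[C]_m) := mxfun (fun t => t * ln t) A.

(* the tau-divergence S_T^{(tau)}(Phi || Psi), where W is the canonical left
   spectral factor W_Psi of Psi.  Integrands are the real parts of the traces
   (these traces are real a.e.). *)
Definition S_T (m : nat) (tau : R) (W Phi Psi : R -> 'M[C]_m) : \bar R :=
  let X x := invmx (W x) *m Phi x *m mxstar (invmx (W x)) in
  let PhiPsiinv x := \tr (Phi x *m invmx (Psi x)) in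
  if tau == 0 then
    (circ_int (fun x => complex.Re
        (\tr (mxlog (Psi x)) - \tr (mxlog (Phi x)) + PhiPsiinv x)%R) - (m%:R)%:E)%E
  else if tau == 1 then
    (circ_int (fun x => complex.Re
        (\tr (mxxlogx (X x)) - PhiPsiinv x)%R) + (m%:R)%:E)%E
  else
    (circ_int (fun x => complex.Re
        ((tau * (tau - 1))^-1%:C * \tr (mxpow tau (X x))
          - (tau - 1)^-1%:C * PhiPsiinv x)%R) + (m%:R / tau)%R%:E)%E.

End Defs.

From HB Require Import structures.
From mathcomp Require Import all_boot all_order all_algebra.
From mathcomp Require Import sesquilinear spectral.
From mathcomp Require Import complex.
From mathcomp Require Import all_classical all_reals all_analysis.

(* Pointwise on the circle, write [Psi = W W^*] and [X = W^-1 Phi W^-*].  Then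
   [X] is similar to [Phi Psi^-1], and passing to [(T^* Phi T, T^* Psi T)]
   conjugates [Phi Psi^-1] by [T^*].  So the two whitened matrices are Hermitian
   with the same characteristic polynomial, hence the same eigenvalues, and
   every spectral trace [tr f(X)] is unchanged, as is [tr (Phi Psi^-1)].  The
   log-determinants of [Phi] and [Psi] are both shifted by [ln |det T|^2], so
   their difference is unchanged.  The integrands of [S_T] thus agree almost
   everywhere, and so do the integrals: for nonnegative functions no
   measurability is needed, the integral being a supremum over simple
   functions. *)

Set Implicit Arguments.
Unset Strict Implicit.
Unset Printing Implicit Defensive.

Import Order.TTheory GRing.Theory Num.Theory.
Local Open Scope classical_set_scope.
Local Open Scope ring_scope.
Local Open Scope complex_scope.

Local Notation ev A := (spectral_diag A 0).

Section integral_nonmeasurable.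
Context d (T : measurableType d) (R : realType).
Variable mu : {measure set T -> \bar R}.
Local Open Scope ereal_scope.
Import HBNNSimple.

(* Every simple function below [F] can be cut down, outside the negligible set
   where [F <= G] fails, to a simple function below [G] with the same integral. *)
Lemma ae_ge0_le_integral_nonmeasurable (F G : T -> \bar R) :
  (forall x, 0 <= F x) -> (forall x, 0 <= G x) ->
  {ae mu, forall x, F x <= G x} -> \int[mu]_x F x <= \int[mu]_x G x.
Proof.
move=> F0 G0 [N [mN N0 FG]]; rewrite !ge0_integralTE //.
apply: ge_ereal_sup => _ [h /= hF <-].
have mCN : measurable (~` N) by exact: measurableC.
apply: ereal_sup_ubound; exists (proj_nnsfun h mCN) => [x /=|].
  rewrite /measurable_realfun.mindic indicE.
  have [Nx|nNx] := pselect (N x).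
    by rewrite memNset ?mulr0 ?G0.
  rewrite mem_set // mulr1; apply: le_trans (hF x) _.
  by apply: contrapT => /(FG x).
have hE := integral_nnsfun mu measurableT h.
have hNE := integral_nnsfun mu measurableT (proj_nnsfun h mCN).
rewrite !patch_setT in hE hNE; rewrite /= -hE -hNE.
apply: ae_eq_integral => //; [exact/measurable_realfun.measurable_EFinP..|].
exists N; split => // x /= hx; apply: contrapT => nNx; apply: hx => _.
by rewrite /measurable_realfun.mindic indicE mem_set ?mulr1.
Qed.

Lemma ae_eq_integral_nonmeasurable (D : set T) (F G : T -> \bar R) :
  {ae mu, forall x, D x -> F x = G x} ->
  \int[mu]_(x in D) F x = \int[mu]_(x in D) G x.
Proof.
move=> FG; rewrite integral_mkcond [RHS]integral_mkcond integralE [RHS]integralE.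
have FGD : {ae mu, forall x, F \_ D x = G \_ D x}.
  by apply: filterS FG => x FGx; rewrite !patchE; case: ifPn => // /set_mem/FGx.
congr (_ - _); apply/le_anti/andP; split;
  apply: ae_ge0_le_integral_nonmeasurable => //;
  by apply: filterS FGD => x; rewrite !(funeposE, funenegE) => ->.
Qed.

End integral_nonmeasurable.

(* The generic [Filter (almost_everywhere _)] hint does not fire for Lebesgue
   measure on [R]. *)
#[local] Instance lebesgue_ae_filter (R : realType) :
  Filter (nbhs (almost_everywhere (@lebesgue_measure R))) :=
  ae_filter_ringOfSetsType _.

Lemma circ_int_ae_eq (R : realType) (f g : R -> R) :
  {ae @lebesgue_measure R, forall x, Tdom x -> f x = g x} ->
  circ_int f = circ_int g.
Proof.
move=> fg; rewrite /circ_int; congr (_ * _)%E.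
by apply: ae_eq_integral_nonmeasurable; apply: filterS fg => x fgx /fgx ->.
Qed.

Section star.
Context {R : realType}.
Local Notation C := R[i].

Lemma mxstarK m n (A : 'M[C]_(m, n)) : mxstar (mxstar A) = A.
Proof. exact: trmxCK. Qed.

Lemma mxstarM m n p (A : 'M[C]_(m, n)) (B : 'M[C]_(n, p)) :
  mxstar (A *m B) = mxstar B *m mxstar A.
Proof. by rewrite /mxstar trmx_mul map_mxM. Qed.

Lemma mxstarV n (A : 'M[C]_n) : mxstar (invmx A) = invmx (mxstar A).
Proof. by rewrite /mxstar trmx_inv map_invmx. Qed.

Lemma unitmx_star n (A : 'M[C]_n) : (mxstar A \in unitmx) = (A \in unitmx).
Proof. by rewrite /mxstar map_unitmx unitmx_tr. Qed.

Lemma hermitian_normalmx_star n (A : 'M[C]_n) : mxstar A = A -> A \is normalmx.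
Proof. by move=> hA; apply/normalmxP; rewrite -/(mxstar A) hA. Qed.

Lemma mxstar_congr n (S A : 'M[C]_n) : mxstar A = A ->
  mxstar (mxstar S *m A *m S) = mxstar S *m A *m S.
Proof. by move=> hA; rewrite !mxstarM mxstarK hA mulmxA. Qed.

Lemma mxstar_conj n (S A : 'M[C]_n) : mxstar A = A ->
  mxstar (S *m A *m mxstar S) = S *m A *m mxstar S.
Proof. by move=> hA; rewrite !mxstarM mxstarK hA mulmxA. Qed.

End star.

Lemma invmxM (F : fieldType) n (A B : 'M[F]_n) : A \in unitmx -> B \in unitmx ->
  invmx (A *m B) = invmx B *m invmx A.
Proof.
move=> uA uB; have uAB : A *m B \in unitmx by rewrite unitmx_mul uA.
rewrite -[RHS]mulmx1 -(mulmxV uAB) !mulmxA -[invmx B *m invmx A *m A]mulmxA.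
by rewrite mulVmx // mulmx1 mulVmx // mul1mx.
Qed.

Lemma char_poly_similar (F : fieldType) n (S A : 'M[F]_n) : S \in unitmx ->
  char_poly (S *m A *m invmx S) = char_poly A.
Proof.
move=> uS; rewrite /char_poly.
have hX : map_mx polyC S *m 'X%:M *m map_mx polyC (invmx S) = 'X%:M.
  by rewrite scalar_mxC -mulmxA -map_mxM mulmxV // map_mx1 mulmx1.
have -> : char_poly_mx (S *m A *m invmx S) =
    map_mx polyC S *m char_poly_mx A *m map_mx polyC (invmx S).
  by rewrite /char_poly_mx mulmxBr mulmxBl -!map_mxM hX.
rewrite !det_mulmx !det_map_mx mulrC mulrA -rmorphM -det_mulmx.
by rewrite mulVmx // det1 rmorph1 mul1r.
Qed.

Lemma ln_prod (R : realType) (I : Type) (r : seq I) (P : pred I) (f : I -> R) :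
  (forall i, P i -> 0 < f i) ->
  ln (\prod_(i <- r | P i) f i) = \sum_(i <- r | P i) ln (f i).
Proof.
move=> f_gt0; elim: r => [|i r IHr]; first by rewrite !big_nil ln1.
rewrite !big_cons; case: ifP => // Pi.
by rewrite lnM ?IHr // posrE; [exact: f_gt0 | exact: prodr_gt0].
Qed.

Section spectral_calculus.
Context {R : realType}.
Local Notation C := R[i].
Implicit Types (n : nat) (f : R -> R).

Lemma normalmx_spectral_decomp n (A : 'M[C]_n) : A \is normalmx ->
  A = invmx (spectralmx A) *m diag_mx (spectral_diag A) *m spectralmx A.
Proof. by move/orthomx_spectralP. Qed.

Lemma mxtrace_mxfun n f (A : 'M[C]_n) :
  \tr (mxfun f A) = \sum_i (f (complex.Re (ev A i)))%:C.
Proof.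
rewrite /mxfun mxtrace_mulC mulmxA mulmxV ?spectral_unit // mul1mx mxtrace_diag.
by apply: eq_bigr => i _; rewrite mxE.
Qed.

Lemma char_poly_normalmx n (A : 'M[C]_n) : A \is normalmx ->
  char_poly A = \prod_i ('X - (ev A i)%:P).
Proof.
move=> /normalmx_spectral_decomp {1}->.
rewrite -{2}(invmxK (spectralmx A)) char_poly_similar ?unitmx_inv ?spectral_unit //.
rewrite char_poly_trig ?diag_mx_is_trig //.
by apply: eq_bigr => i _; rewrite mxE eqxx mulr1n.
Qed.

Lemma det_normalmx n (A : 'M[C]_n) : A \is normalmx -> \det A = \prod_i ev A i.
Proof.
move=> /normalmx_spectral_decomp {1}->.
rewrite !det_mulmx det_diag mulrC mulrA -det_mulmx mulmxV ?spectral_unit //.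
by rewrite det1 mul1r.
Qed.

(* Normal matrices with the same characteristic polynomial have the same
   eigenvalues counted with multiplicity. *)
Lemma mxtrace_mxfun_char_poly n f (A B : 'M[C]_n) :
  A \is normalmx -> B \is normalmx -> char_poly A = char_poly B ->
  \tr (mxfun f A) = \tr (mxfun f B).
Proof.
move=> nA nB AB; rewrite !mxtrace_mxfun.
have evAB : perm_eq [seq ev A i | i : 'I_n] [seq ev B i | i : 'I_n].
  apply: prod_XsubC_eq; rewrite !big_map.
  exact: etrans (esym (char_poly_normalmx nA)) (etrans AB (char_poly_normalmx nB)).
have := perm_big _ evAB (op := +%R) (x := 0) (P := xpredT)
  (F := fun z => (f (complex.Re z))%:C).
by rewrite !big_map.
Qed.

End spectral_calculus.

Section positive_definite.
Context {R : realType}.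
Local Notation C := R[i].

Definition posdefmx n (A : 'M[C]_n) :=
  forall v : 'rV[C]_n, v != 0 -> 0 < (v *m A *m mxstar v) 0 0.

Lemma mxstar_dot_gt0 n (v : 'rV[C]_n) : v != 0 -> 0 < (v *m mxstar v) 0 0.
Proof. by rewrite -dotmxE dnorm_gt0. Qed.

Lemma posdefmx_coercive n (A : 'M[C]_n) (eps : R) : 0 < eps ->
  (forall v : 'rV[C]_n, eps%:C * (v *m mxstar v) 0 0 <= (v *m A *m mxstar v) 0 0) ->
  posdefmx A.
Proof.
move=> eps_gt0 epsA v v_neq0; apply: lt_le_trans (epsA v).
by rewrite mulr_gt0 ?mxstar_dot_gt0 ?ltcR.
Qed.

Lemma posdefmx_congr n (S A : 'M[C]_n) : S \in unitmx -> posdefmx A ->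
  posdefmx (mxstar S *m A *m S).
Proof.
move=> uS pA v v_neq0.
have -> : v *m (mxstar S *m A *m S) *m mxstar v =
    v *m mxstar S *m A *m mxstar (v *m mxstar S).
  by rewrite mxstarM mxstarK !mulmxA.
apply: pA; apply: contra v_neq0 => /eqP vS0.
by rewrite -[v](mulmxK (_ : mxstar S \in unitmx)) ?unitmx_star // vS0 mul0mx.
Qed.

(* The rows of the unitary diagonalising matrix are unit eigenvectors. *)
Lemma spectral_diag_gt0 n (A : 'M[C]_n) : A \is normalmx -> posdefmx A ->
  forall i, 0 < ev A i.
Proof.
move=> nA pA i; set P := spectralmx A; set v := row i P.
have PA : P *m A = diag_mx (spectral_diag A) *m P.
  by rewrite {1}(normalmx_spectral_decomp nA) -/P !mulmxA mulmxV ?spectral_unit ?mul1mx.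
have vA : v *m A = ev A i *: v.
  by rewrite -row_mul PA mul_diag_mx; apply/matrixP => a b; rewrite !mxE.
have vv : (v *m mxstar v) 0 0 = 1.
  by rewrite -dotmxE; move/row_unitarymxP: (spectral_unitarymx A) => ->; rewrite eqxx.
have v_neq0 : v != 0.
  by apply: contra_eq_neq vv => ->; rewrite mul0mx mxE eq_sym oner_neq0.
by have := pA v v_neq0; rewrite vA -scalemxAl mxE vv mulr1.
Qed.

Lemma complex_gt0E (x : C) : 0 < x -> x = (complex.Re x)%:C /\ 0 < complex.Re x.
Proof. by move=> x_gt0; rewrite RRe_real ?gtr0_real // -ltcR RRe_real ?gtr0_real. Qed.

End positive_definite.

Section congruence_invariance.
Context {R : realType}.
Local Notation C := R[i].
Variable n : nat.
Implicit Types A B S T W : 'M[C]_n.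

Lemma mxtrace_mxlog A : mxstar A = A -> posdefmx A ->
  \tr (mxlog A) = (ln (complex.Re (\det A)))%:C.
Proof.
move=> hA pA; have nA := hermitian_normalmx_star hA.
have ev_gt0 i := complex_gt0E (spectral_diag_gt0 nA pA i).
rewrite /mxlog mxtrace_mxfun det_normalmx //.
under [\prod_i _]eq_bigr => i _ do rewrite (ev_gt0 i).1.
rewrite -rmorph_prod -rmorph_sum /= ln_prod //.
by move=> i _; exact: (ev_gt0 i).2.
Qed.

Lemma det_posdefmx_gt0 A : mxstar A = A -> posdefmx A -> 0 < \det A.
Proof.
move=> hA pA; have nA := hermitian_normalmx_star hA.
by rewrite det_normalmx // prodr_gt0 // => i _; exact: spectral_diag_gt0.
Qed.

(* [\det (T^* A T) = |\det T|^2 \det A], so the log-determinant is shifted by a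
   constant independent of [A]. *)
Lemma mxtrace_mxlog_congr T A : T \in unitmx -> mxstar A = A -> posdefmx A ->
  \tr (mxlog (mxstar T *m A *m T)) =
  (ln (complex.Re (\det (mxstar T) * \det T)))%:C + \tr (mxlog A).
Proof.
move=> uT hA pA; have pTAT := posdefmx_congr uT pA.
rewrite mxtrace_mxlog ?mxstar_congr // mxtrace_mxlog //.
have c_gt0 : 0 < \det (mxstar T) * \det T.
  by rewrite /mxstar det_map_mx det_tr mulrC mul_conjC_gt0 -unitfE -unitmxE.
have [c_real c_Re_gt0] := complex_gt0E c_gt0.
have [a_real a_gt0] := complex_gt0E (det_posdefmx_gt0 hA pA).
by rewrite !det_mulmx mulrAC c_real a_real -rmorphM /= lnM ?posrE // rmorphD.
Qed.

Lemma char_poly_whiten A B W : W \in unitmx -> B = W *m mxstar W ->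
  char_poly (invmx W *m A *m mxstar (invmx W)) = char_poly (A *m invmx B).
Proof.
move=> uW ->; have uWs : mxstar W \in unitmx by rewrite unitmx_star.
have -> : invmx W *m A *m mxstar (invmx W) =
    invmx W *m (A *m invmx (W *m mxstar W)) *m invmx (invmx W).
  by rewrite invmxK invmxM // mxstarV !mulmxA mulmxKV.
by apply: char_poly_similar; rewrite unitmx_inv.
Qed.

Lemma congr_mul_invmx T A B : T \in unitmx -> B \in unitmx ->
  mxstar T *m A *m T *m invmx (mxstar T *m B *m T) =
  mxstar T *m (A *m invmx B) *m invmx (mxstar T).
Proof.
move=> uT uB; have uTs : mxstar T \in unitmx by rewrite unitmx_star.
rewrite invmxM ?unitmx_mul ?uTs // invmxM // !mulmxA.
by rewrite -[_ *m T *m invmx T]mulmxA mulmxV // mulmx1.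
Qed.

Lemma mxtrace_congr_mul_invmx T A B : T \in unitmx -> B \in unitmx ->
  \tr (mxstar T *m A *m T *m invmx (mxstar T *m B *m T)) = \tr (A *m invmx B).
Proof.
move=> uT uB; rewrite (congr_mul_invmx A uT uB) mxtrace_mulC !mulmxA.
by rewrite mulVmx ?unitmx_star // mul1mx.
Qed.

(* Both whitened matrices are similar to [A B^-1], resp. to its conjugate by [T^*]. *)
Lemma mxtrace_mxfun_whiten_congr (f : R -> R) T A B W1 W2 :
  mxstar A = A -> T \in unitmx -> W1 \in unitmx -> W2 \in unitmx ->
  B = W1 *m mxstar W1 -> mxstar T *m B *m T = W2 *m mxstar W2 ->
  \tr (mxfun f (invmx W1 *m A *m mxstar (invmx W1))) =
  \tr (mxfun f (invmx W2 *m (mxstar T *m A *m T) *m mxstar (invmx W2))).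
Proof.
move=> hA uT uW1 uW2 BW1 BW2.
have uB : B \in unitmx by rewrite BW1 unitmx_mul uW1 unitmx_star.
apply: mxtrace_mxfun_char_poly.
- exact/hermitian_normalmx_star/mxstar_conj.
- exact/hermitian_normalmx_star/mxstar_conj/mxstar_congr.
rewrite (char_poly_whiten _ uW1 BW1) (char_poly_whiten _ uW2 BW2).
by rewrite (congr_mul_invmx A uT uB); apply/esym/char_poly_similar; rewrite unitmx_star.
Qed.

End congruence_invariance.

Section divergence_invariance.
Context {R : realType}.
Local Notation C := R[i].

Lemma whitened_invariants n (T A B W1 W2 : 'M[C]_n) :
  mxstar A = A -> mxstar B = B -> posdefmx A -> posdefmx B ->
  T \in unitmx -> W1 \in unitmx -> W2 \in unitmx ->
  B = W1 *m mxstar W1 -> mxstar T *m B *m T = W2 *m mxstar W2 ->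
  [/\ forall f : R -> R,
        \tr (mxfun f (invmx W1 *m A *m mxstar (invmx W1))) =
        \tr (mxfun f (invmx W2 *m (mxstar T *m A *m T) *m mxstar (invmx W2))),
      \tr (A *m invmx B) = \tr (mxstar T *m A *m T *m invmx (mxstar T *m B *m T)) &
      \tr (mxlog B) - \tr (mxlog A) =
      \tr (mxlog (mxstar T *m B *m T)) - \tr (mxlog (mxstar T *m A *m T))].
Proof.
move=> hA hB pA pB uT uW1 uW2 BW1 BW2.
have uB : B \in unitmx by rewrite BW1 unitmx_mul uW1 unitmx_star.
split.
- by move=> f; apply: mxtrace_mxfun_whiten_congr BW1 BW2.
- by rewrite mxtrace_congr_mul_invmx.
- rewrite (mxtrace_mxlog_congr uT hA pA) (mxtrace_mxlog_congr uT hB pB).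
  move: (\tr (mxlog A)) (\tr (mxlog B)) ((ln _)%:C) => a b c.
  by rewrite [c + b]addrC addrKA.
Qed.

Local Notation mu := (@lebesgue_measure R).

Lemma S_T_ae_congr m tau (W1 Phi1 Psi1 W2 Phi2 Psi2 : R -> 'M[C]_m) :
  {ae mu, forall x, Tdom x ->
    [/\ forall f : R -> R,
          \tr (mxfun f (invmx (W1 x) *m Phi1 x *m mxstar (invmx (W1 x)))) =
          \tr (mxfun f (invmx (W2 x) *m Phi2 x *m mxstar (invmx (W2 x)))),
        \tr (Phi1 x *m invmx (Psi1 x)) = \tr (Phi2 x *m invmx (Psi2 x)) &
        \tr (mxlog (Psi1 x)) - \tr (mxlog (Phi1 x)) =
        \tr (mxlog (Psi2 x)) - \tr (mxlog (Phi2 x))]} ->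
  S_T tau W1 Phi1 Psi1 = S_T tau W2 Phi2 Psi2.
Proof.
move=> inv.
have [->|tau_neq0] := eqVneq tau 0.
  rewrite /S_T eqxx; apply: (congr1 (fun e => e - _)%E); apply: circ_int_ae_eq.
  by apply: filterS inv => x inv /inv[_ -> ->].
have [->|tau_neq1] := eqVneq tau 1.
  rewrite /S_T oner_eq0 eqxx; apply: (congr1 (fun e => e + _)%E).
  apply: circ_int_ae_eq; apply: filterS inv => x inv /inv[fX -> _].
  by rewrite /mxxlogx fX.
rewrite /S_T (negbTE tau_neq0) (negbTE tau_neq1).
apply: (congr1 (fun e => e + _)%E); apply: circ_int_ae_eq.
by apply: filterS inv => x inv /inv[fX -> _]; rewrite /mxpow fX.
Qed.

End divergence_invariance.

Theorem mainTheorem3 (R : realType) (m : nat) (Phi Psi T : R -> 'M[R[i]]_m) :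
  spectral_density Phi -> spectral_density Psi ->
  mx_measurable T -> ess_bounded T ->
  {ae @lebesgue_measure R, forall x, Tdom x -> T x \in unitmx} ->
  ess_bounded (fun x => invmx (T x)) ->
  forall (tau : R) (W1 W2 : R -> 'M[R[i]]_m),
    canonical_left_factor Psi W1 ->
    canonical_left_factor (fun x => mxstar (T x) *m Psi x *m T x) W2 ->
    S_T tau W1 Phi Psi =
    S_T tau W2 (fun x => mxstar (T x) *m Phi x *m T x)
               (fun x => mxstar (T x) *m Psi x *m T x).
Proof.
move=> [_ _ PhiH [e1 e1_gt0 PhiC]] [_ _ PsiH [e2 e2_gt0 PsiC]] _ _ Tunit _
  tau W1 W2 [_ [W1unit _] _ _ W1fac] [_ [W2unit _] _ _ W2fac].
have PhiP : {ae @lebesgue_measure R, forall x, Tdom x -> posdefmx (Phi x)}.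
  by apply: filterS PhiC => x coer /coer; exact: posdefmx_coercive.
have PsiP : {ae @lebesgue_measure R, forall x, Tdom x -> posdefmx (Psi x)}.
  by apply: filterS PsiC => x coer /coer; exact: posdefmx_coercive.
apply: S_T_ae_congr; near=> x => Dx.
apply: (@whitened_invariants _ _ (T x) (Phi x) (Psi x) (W1 x) (W2 x));
  by move: Dx; near: x.
Unshelve. all: by end_near.
Qed.
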